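(* There exist finite connected simple graphs $H_1$ and $H_2$ having a common universal cover (equivalently, a common finite connected covering graph) such that their minimal common cover is not unique. That is, there exist at least two pairwise non-isomorphic connected graphs, each of which is a covering graph of both $H_1$ and $H_2$, and each of which has the minimum number of vertices among all connected common covering graphs of $H_1$ and $H_2$.
   Context: A graph $\tilde G$ is a covering graph of a graph $G$ if there is a surjective graph homomorphism $f\colon\tilde G\to G$ such that, for every vertex $v$ of $\tilde G$, $f$ maps the set of edges incident with $v$ bijectively onto the set of edges incident with $f(v)$. A common cover of $H_1$ and $H_2$ is a graph that is a covering graph of both. The universal cover of a connected graph is its (possibly infinite) universal covering tree. *)

From mathcomp Require Import all_boot.
Set Implicit Arguments. Unset Strict Implicit. Unset Printing Implicit Defensive.

Record sgraph := SGraph {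
  vert :> finType;
  adj : rel vert;
  adj_sym : symmetric adj;
  adj_irr : irreflexive adj }.

Definition connected (G : sgraph) : Prop :=
  0 < #|vert G| /\ forall x y : vert G, connect (@adj G) x y.

(* f : C -> G is a covering map: a surjective graph homomorphism which maps
   the edges at each vertex v bijectively onto the edges at f v.  For simple
   graphs, edges at v correspond to neighbours of v; given the homomorphism
   property, bijectivity means: every neighbour w of f v has exactly one
   preimage among the neighbours of v. *)
Definition is_covering_map (C G : sgraph) (f : vert C -> vert G) : Prop :=
  (forall y : vert G, exists x : vert C, f x = y) /\
  (forall x y : vert C, adj x y -> adj (f x) (f y)) /\
  (forall (v : vert C) (w : vert G), adj (f v) w ->
     exists! u : vert C, adj v u /\ f u = w).

Definition covers (C G : sgraph) : Prop :=
  exists f : vert C -> vert G, is_covering_map f.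

Definition isomorphic (C D : sgraph) : Prop :=
  exists g : vert C -> vert D, bijective g /\
    forall x y : vert C, adj (g x) (g y) = adj x y.

Definition conn_common_cover (C H1 H2 : sgraph) : Prop :=
  connected C /\ covers C H1 /\ covers C H2.

Definition minimal_common_cover (C H1 H2 : sgraph) : Prop :=
  conn_common_cover C H1 H2 /\
  forall D : sgraph, conn_common_cover D H1 H2 -> #|vert C| <= #|vert D|.

From mathcomp Require Import all_boot.
Set Implicit Arguments. Unset Strict Implicit. Unset Printing Implicit Defensive.

(* Along every edge of the base the fibres of a covering map have the same
   size, so over a connected base all fibres have the same size and the order
   of the base divides that of the cover.  Hence a connected common cover of
   connected graphs on 6 and 9 vertices has at least lcm(6, 9) = 18 vertices.
   We exhibit two such common covers on exactly 18 vertices, one containing a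
   triangle and one triangle-free, so they are not isomorphic. *)

Section CoveringFibres.
Variables (C G : sgraph) (f : C -> G).

Definition fibre (a : G) : {set C} := [set v | f v == a].

Lemma card_sum_fibres : #|C| = \sum_(a : G) #|fibre a|.
Proof.
rewrite -sum1_card (partition_big f predT) //=.
by apply: eq_bigr => a _; rewrite -sum1_card; apply: eq_bigl => v; rewrite inE.
Qed.

Hypothesis f_cover : is_covering_map f.

(* Sending [v] to its unique neighbour over [b] is injective on the fibre over
   [a], by uniqueness of lifts of the edge [ba] at that neighbour. *)
Lemma leq_card_fibre_adj (a b : G) : adj a b -> #|fibre a| <= #|fibre b|.
Proof.
move=> ab; have [_ [_ lift_unique]] := f_cover.
pose g v := odflt v [pick u | adj v u && (f u == b)].
have gP v : v \in fibre a -> adj v (g v) /\ f (g v) = b.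
  rewrite inE => /eqP fv; rewrite /g; case: pickP => [u /andP[vu /eqP ->] //|none].
  have := lift_unique v b; rewrite fv => /(_ ab) [u [[vu fu] _]].
  by move: (none u); rewrite vu fu eqxx.
have g_inj : {in fibre a &, injective g}.
  move=> v1 v2 v1a v2a g12; have [v1_g fg1] := gP _ v1a; have [v2_g _] := gP _ v2a.
  move: v1a v2a; rewrite !inE => /eqP fv1 /eqP fv2.
  have := lift_unique (g v1) a; rewrite fg1 adj_sym => /(_ ab) [w [_ uniq_w]].
  rewrite -(uniq_w v1); last by rewrite adj_sym v1_g fv1.
  by rewrite (uniq_w v2) // g12 adj_sym v2_g fv2.
rewrite -(card_in_imset g_inj); apply/subset_leq_card/subsetP => _ /imsetP[v va ->].
by rewrite inE (proj2 (gP _ va)).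
Qed.

Lemma card_fibre_connect (a b : G) : connect (@adj G) a b -> #|fibre a| = #|fibre b|.
Proof.
case/connectP=> p; elim: p a => [|c p IHp] a /= => [_ -> //|/andP[ac pc] lc].
by rewrite -(IHp c pc lc); apply/eqP; rewrite eqn_leq !leq_card_fibre_adj // adj_sym.
Qed.

Lemma card_covered_dvdn : connected G -> #|G| %| #|C|.
Proof.
case=> G_gt0 G_conn; have [a0 _] := card_gt0P G_gt0.
rewrite card_sum_fibres (eq_bigr (fun=> #|fibre a0|)) ?sum_nat_const ?dvdn_mulr //.
by move=> a _; apply: card_fibre_connect.
Qed.

End CoveringFibres.

Lemma lcmn_dvdn_common_cover (H1 H2 D : sgraph) :
  connected H1 -> connected H2 -> conn_common_cover D H1 H2 ->
  lcmn #|H1| #|H2| %| #|D|.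
Proof.
move=> H1_conn H2_conn [_ [[f1 f1_cover] [f2 f2_cover]]].
by rewrite dvdn_lcm !(card_covered_dvdn f1_cover, card_covered_dvdn f2_cover).
Qed.

Lemma minimal_common_cover_lcmn (H1 H2 C : sgraph) :
  connected H1 -> connected H2 -> conn_common_cover C H1 H2 ->
  #|C| = lcmn #|H1| #|H2| -> minimal_common_cover C H1 H2.
Proof.
move=> H1_conn H2_conn C_cover C_card; split=> // D D_cover.
rewrite C_card; apply: dvdn_leq; first by case: D_cover => [[]].
exact: lcmn_dvdn_common_cover.
Qed.

Definition triangle (G : sgraph) : Prop :=
  exists x y z : G, [&& adj x y, adj y z & adj x z].

Lemma isomorphic_triangle (C D : sgraph) : isomorphic C D -> triangle C -> triangle D.
Proof. by case=> g [_ g_adj] [x [y [z xyz]]]; exists (g x), (g y), (g z); rewrite !g_adj. Qed.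

Lemma mem_iota0 n i : (i \in iota 0 n) = (i < n).
Proof. by rewrite mem_iota add0n. Qed.

Lemma all_iotaP n (P : pred nat) : reflect (forall x : 'I_n, P x) (all P (iota 0 n)).
Proof.
apply: (iffP allP) => [allP x | allP i]; first by apply: allP; rewrite mem_iota0.
by rewrite mem_iota0 => i_lt_n; apply: (allP (Ordinal i_lt_n)).
Qed.

Lemma has_iotaP n (P : pred nat) : reflect (exists x : 'I_n, P x) (has P (iota 0 n)).
Proof.
apply: (iffP hasP) => [[i] | [x Px]]; last by exists (val x); rewrite ?mem_iota0 ?ltn_ord.
by rewrite mem_iota0 => i_lt_n Pi; exists (Ordinal i_lt_n).
Qed.

Definition edge_adj (E : seq (nat * nat)) (a b : nat) : bool :=
  (a != b) && (((a, b) \in E) || ((b, a) \in E)).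

Definition edge_rel n E : rel 'I_n := fun x y => edge_adj E x y.

Lemma edge_rel_sym n E : symmetric (@edge_rel n E).
Proof. by move=> x y; rewrite /edge_rel /edge_adj eq_sym orbC. Qed.

Lemma edge_rel_irr n E : irreflexive (@edge_rel n E).
Proof. by move=> x; rewrite /edge_rel /edge_adj eqxx. Qed.

Definition edge_graph n E : sgraph := SGraph (@edge_rel_sym n E) (@edge_rel_irr n E).

Definition covering_mapb n m E F (f : nat -> nat) : bool :=
  [&& all (fun y => has (fun x => f x == y) (iota 0 n)) (iota 0 m),
      all (fun x => f x < m) (iota 0 n),
      all (fun x => all (fun y => edge_adj E x y ==> edge_adj F (f x) (f y)) (iota 0 n))
          (iota 0 n) &
      all (fun v => all (fun w => edge_adj F (f v) w ==>
          (size [seq u <- iota 0 n | edge_adj E v u && (f u == w)] == 1))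
        (iota 0 m)) (iota 0 n)].

Definition ord_map m (f : nat -> nat) {n} (v : 'I_n) : 'I_m.+1 := inord (f v).

Lemma covering_mapbP n m E F f : covering_mapb n m.+1 E F f ->
  @is_covering_map (edge_graph n E) (edge_graph m.+1 F) (ord_map m f).
Proof.
case/and4P=> /all_iotaP f_onto /all_iotaP f_bound /all_iotaP f_hom /all_iotaP f_lifts.
have f_val (v : 'I_n) : ord_map m f v = f v :> nat by rewrite inordK ?f_bound.
split; [|split].
- move=> y; have /has_iotaP[x /eqP fx] := f_onto y.
  by exists x; apply: val_inj; rewrite /= f_val.
- by move=> x y; move/all_iotaP: (f_hom x) => /(_ y) /implyP; rewrite /= /edge_rel !f_val.
- move=> v w; rewrite /= /edge_rel f_val => vw.
  move/all_iotaP: (f_lifts v) => /(_ w) /implyP /(_ vw).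
  set lifts := filter _ _; case lifts_u: lifts => [|u []] // _.
  have lifts_mem (u' : 'I_n) : (u' : nat) \in lifts = edge_adj E v u' && (f u' == w).
    by rewrite mem_filter mem_iota0 ltn_ord andbT.
  have u_lt_n : u < n.
    by have := mem_head u [::]; rewrite -lifts_u mem_filter mem_iota0 => /andP[].
  exists (Ordinal u_lt_n); split=> [|u' [vu' fu']].
    have := lifts_mem (Ordinal u_lt_n); rewrite lifts_u mem_head => /esym/andP[vu /eqP fu].
    by split=> //; apply: val_inj; rewrite /= f_val.
  have: (u' : nat) \in lifts by rewrite lifts_mem -fu' f_val eqxx andbT.
  by rewrite lifts_u inE => /eqP u'u; apply: val_inj.
Qed.

Lemma connected_from (G : sgraph) (r : G) :
  (forall y, connect (@adj G) r y) -> connected G.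
Proof.
move=> r_conn; split=> [|x y]; first by apply/card_gt0P; exists r.
apply: connect_trans (r_conn y).
by rewrite (sym_connect_sym (@adj_sym G)).
Qed.

Definition bfs_step n E (S : seq nat) : seq nat :=
  S ++ [seq y <- iota 0 n | (y \notin S) && has (edge_adj E ^~ y) S].

Definition connectedb n E : bool :=
  (0 < n) && all (mem (iter n (bfs_step n E) [:: 0])) (iota 0 n).

Lemma connectedbP n E : connectedb n E -> connected (edge_graph n E).
Proof.
case/andP=> n_gt0 /all_iotaP reached; pose r : 'I_n := Ordinal n_gt0.
have bfs_connect k y : y \in iter k (bfs_step n E) [:: 0] ->
    exists y_lt_n : y < n, connect (@adj (edge_graph n E)) r (Ordinal y_lt_n).
  elim: k y => [|k IHk] y /=; first by rewrite inE => /eqP ->; exists n_gt0.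
  rewrite mem_cat => /orP[/IHk // | ].
  rewrite mem_filter mem_iota0 => /andP[/andP[_ /hasP[x /IHk[x_lt_n r_x] xy]] y_lt_n].
  by exists y_lt_n; apply: connect_trans r_x (connect1 _).
apply: (@connected_from (edge_graph n E) r) => y.
have [y_lt_n r_y] := bfs_connect _ _ (reached y).
by rewrite (_ : y = Ordinal y_lt_n) //; apply: val_inj.
Qed.

Definition triangleb n E : bool :=
  has (fun x => has (fun y => has (fun z =>
    [&& edge_adj E x y, edge_adj E y z & edge_adj E x z]) (iota 0 n)) (iota 0 n)) (iota 0 n).

Lemma trianglebP n E : reflect (triangle (edge_graph n E)) (triangleb n E).
Proof.
apply: (iffP (has_iotaP _ _)) => [[x /has_iotaP[y /has_iotaP[z xyz]]] | [x [y [z xyz]]]].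
  by exists x, y, z.
by exists x; apply/has_iotaP; exists y; apply/has_iotaP; exists z.
Qed.

Definition H1 := edge_graph 6
  [:: (0, 1); (0, 3); (0, 5); (1, 2); (1, 5); (2, 3); (2, 4); (3, 4)].
Definition H2 := edge_graph 9
  [:: (0, 3); (0, 4); (0, 8); (1, 4); (1, 5); (1, 6); (2, 3); (2, 5); (2, 7); (3, 8);
      (4, 6); (5, 7)].

Definition C1 := edge_graph 18
  [:: (0, 3); (0, 9); (0, 15); (1, 4); (1, 10); (1, 16); (2, 5); (2, 11); (2, 17);
      (3, 7); (3, 15); (4, 8); (4, 16); (5, 6); (5, 17); (6, 9); (6, 12); (7, 10);
      (7, 13); (8, 11); (8, 14); (9, 12); (10, 13); (11, 14)].
Definition C2 := edge_graph 18
  [:: (0, 3); (0, 9); (0, 15); (1, 4); (1, 10); (1, 16); (2, 5); (2, 11); (2, 17);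
      (3, 7); (3, 17); (4, 8); (4, 15); (5, 6); (5, 16); (6, 9); (6, 13); (7, 10);
      (7, 14); (8, 11); (8, 12); (9, 12); (10, 13); (11, 14)].

Definition p1 (v : nat) : nat :=
  nth 0 [:: 0; 1; 2; 3; 4; 5; 1; 2; 0; 4; 5; 3; 6; 7; 8; 8; 6; 7] v.
Definition p2 (v : nat) : nat :=
  nth 0 [:: 0; 2; 1; 4; 3; 5; 2; 1; 0; 3; 5; 4; 8; 7; 6; 8; 7; 6] v.

Lemma H1_connected : connected H1. Proof. by apply: connectedbP; vm_compute. Qed.
Lemma H2_connected : connected H2. Proof. by apply: connectedbP; vm_compute. Qed.

Lemma C1_common_cover : conn_common_cover C1 H1 H2.
Proof.
split; first by apply: connectedbP; vm_compute.
by split; [exists (ord_map 5 (divn^~ 3)) | exists (ord_map 8 p1)];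
  apply: covering_mapbP; vm_compute.
Qed.

Lemma C2_common_cover : conn_common_cover C2 H1 H2.
Proof.
split; first by apply: connectedbP; vm_compute.
by split; [exists (ord_map 5 (divn^~ 3)) | exists (ord_map 8 p2)];
  apply: covering_mapbP; vm_compute.
Qed.

Lemma minimal_common_cover18 C :
  conn_common_cover C H1 H2 -> #|C| = 18 -> minimal_common_cover C H1 H2.
Proof.
move=> C_cover C_card; apply: minimal_common_cover_lcmn H1_connected H2_connected C_cover _.
by rewrite C_card /= !card_ord.
Qed.

Theorem mainTheorem6 :
  exists H1 H2 : sgraph,
    connected H1 /\ connected H2 /\
    (exists C : sgraph, conn_common_cover C H1 H2) /\
    exists C1 C2 : sgraph,
      minimal_common_cover C1 H1 H2 /\ minimal_common_cover C2 H1 H2 /\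
      ~ isomorphic C1 C2.
Proof.
exists H1, H2; split; first exact: H1_connected.
split; first exact: H2_connected.
split; first by exists C1; exact: C1_common_cover.
exists C1, C2; split; [|split].
- by apply: minimal_common_cover18 C1_common_cover _; rewrite card_ord.
- by apply: minimal_common_cover18 C2_common_cover _; rewrite card_ord.
- have C1_triangle : triangle C1 by apply/trianglebP; vm_compute.
  have C2_triangle_free : ~ triangle C2 by apply/trianglebP; vm_compute.
  by move=> C1_C2; apply/C2_triangle_free/(isomorphic_triangle C1_C2).
Qed.
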